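(* For all metric balls $\Theta$ in $\mathbb S^1_\omega$ and $\mathcal D'$ in $K_\omega$ with radius less than $1$, the family $(P^-_\Theta A_nU^+_{\mathcal D'})_{n\in\mathbb N}$ is $0$-Lipschitz well-rounded with respect to $(\mathcal V_\epsilon)_{\epsilon>0}$; that is, there exist $\epsilon_0>0$ and $n_0\in\mathbb N$ such that for all $\epsilon\in\,]0,\epsilon_0[$ and $n\ge n_0$, $\mu_G\big((P^-_\Theta A_nU^+_{\mathcal D'})^{+\epsilon}\big)\le\mu_G\big((P^-_\Theta A_nU^+_{\mathcal D'})^{-\epsilon}\big)$.
   Context: $K_\omega$ is the completion of a global function field over $\mathbb F_q$ at a normalized discrete valuation $\omega$; $\mathcal O_\omega$ is its valuation ring, $\pi_\omega$ a fixed uniformizer, $q_\omega$ the order of the residue field, $|x|_\omega=q_\omega^{-\omega(x)}$. $K_\omega^2$ carries the supremum norm $\|(x,y)\|_\omega=\max\{|x|_\omega,|y|_\omega\}$ and $\mathbb S^1_\omega$ is its unit sphere; balls are for the induced ultrametric. $G=\mathrm{SL}_2(K_\omega)$ with Haar measure $\mu_G$. $P^-$ is the lower triangular subgroup, $P^-(\mathcal O_\omega)=P^-\cap\mathcal M_2(\mathcal O_\omega)$; $P^-_\Theta$ is the set of elements of $P^-(\mathcal O_\omega)$ whose first column lies in $\Theta$; $A_n=\{\mathrm{diag}(\pi_\omega^{-n},\pi_\omega^n)\}$; $U^+_{\mathcal D'}=\{\begin{pmatrix}1&\gamma\\0&1\end{pmatrix}:\gamma\in\mathcal D'\}$. For $\epsilon>0$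 let $N_\epsilon=\lfloor-\log_{q_\omega}\epsilon\rfloor$, and let $\mathcal V_\epsilon=\mathrm{SL}_2(\mathcal O_\omega)$ if $\epsilon>1/q_\omega$, and otherwise $\mathcal V_\epsilon=\ker(\mathrm{SL}_2(\mathcal O_\omega)\to\mathrm{SL}_2(\mathcal O_\omega/\pi_\omega^{N_\epsilon}\mathcal O_\omega))$. For $\mathcal B\subset G$: $\mathcal B^{+\epsilon}=\mathcal V_\epsilon\mathcal B\mathcal V_\epsilon=\bigcup_{g,h\in\mathcal V_\epsilon}g\mathcal Bh$ and $\mathcal B^{-\epsilon}=\bigcap_{g,h\in\mathcal V_\epsilon}g\mathcal Bh$. *)

From HB Require Import structures.
From mathcomp Require Import all_boot all_order all_algebra.
From mathcomp Require Import all_classical all_reals all_analysis.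

Set Implicit Arguments.
Unset Strict Implicit.
Unset Printing Implicit Defensive.

Import Order.TTheory GRing.Theory Num.Theory.
Local Open Scope classical_set_scope.
Local Open Scope ring_scope.

(* K is a field, v : K -> int the normalized discrete valuation (its value   *)
(* at 0 is irrelevant and never used: v 0 stands for +oo), pi a uniformizer, *)
(* q = q_omega the order of the residue field.                               *)

(* x belongs to pi^N O, i.e. omega(x) >= N (with omega(0) = +oo). *)
Definition vge (K : fieldType) (v : K -> int) (N : int) (x : K) : Prop :=
  x = 0 \/ N <= v x.

(* K is the completion of a global function field at a place with normalized
   valuation v, uniformizer pi and residue field of order q; equivalently
   (classification of local fields) K is a field of positive characteristic,
   complete for a normalized discrete valuation v with finite residue field
   of order q. *)
Definition is_local_function_field (K : fieldType) (v : K -> int) (q : nat)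
    (pi : K) : Prop :=
      (exists p : nat, prime p /\ (p%:R : K) = 0) /\
  [/\
      (forall x y : K, x != 0 -> y != 0 -> v (x * y) = v x + v y),
      (forall x y : K, x != 0 -> y != 0 -> x + y != 0 ->
         Num.min (v x) (v y) <= v (x + y)),
      (pi != 0 /\ v pi = 1),
      (* the residue field O / pi O is finite of order q *)
      (exists s : seq K, [/\ size s = q, uniq s,
          (forall a, a \in s -> vge v 0 a),
          (forall a b, a \in s -> b \in s -> a != b -> ~ vge v 1 (a - b)) &
          (forall x, vge v 0 x -> exists2 a, a \in s & vge v 1 (x - a))]) &
      (forall u : nat -> K,
         (forall N : int, exists M : nat, forall m n : nat,
             (M <= m)%N -> (M <= n)%N -> vge v N (u m - u n)) ->
         exists l : K, forall N : int, exists M : nat, forall n : nat,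
             (M <= n)%N -> vge v N (u n - l))].

Definition absv (R : realType) (K : fieldType) (v : K -> int) (q : nat)
    (x : K) : R :=
  if x == 0 then 0 else (q%:R : R) ^ (- v x).

Definition norm2 (R : realType) (K : fieldType) (v : K -> int) (q : nat)
    (w : K * K) : R :=
  Num.max (absv R v q w.1) (absv R v q w.2).

Definition ballS1 (R : realType) (K : fieldType) (v : K -> int) (q : nat)
    (c : K * K) (r : R) : set (K * K) :=
  [set w | norm2 R v q w = 1 /\ norm2 R v q (w.1 - c.1, w.2 - c.2) <= r].

Definition ballK (R : realType) (K : fieldType) (v : K -> int) (q : nat)
    (d : K) (r : R) : set K :=
  [set x | absv R v q (x - d) <= r].

Definition SL2 (K : fieldType) := {M : 'M[K]_2 | \det M == 1}.
HB.instance Definition _ (K : fieldType) :=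
  Choice.copy (SL2 K) {M : 'M[K]_2 | \det M == 1}.

Lemma SL2_one_proof (K : fieldType) : \det (1%:M : 'M[K]_2) == 1.
Proof. by rewrite det1. Qed.

Definition SL2_one (K : fieldType) : SL2 K := exist _ 1%:M (SL2_one_proof K).

HB.instance Definition _ (K : fieldType) := isPointed.Build (SL2 K) (SL2_one K).

Definition mx2 (K : fieldType) (a b c d : K) : 'M[K]_2 :=
  \matrix_(i < 2, j < 2)
    if (i == 0 :> nat) then (if (j == 0 :> nat) then a else b)
    else (if (j == 0 :> nat) then c else d).

Definition i0 : 'I_2 := ord0.
Definition i1 : 'I_2 := ord_max.

Definition setmul (K : fieldType) (X Y : set (SL2 K)) : set (SL2 K) :=
  [set g | exists x y, [/\ X x, Y y & val g = val x *m val y]].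

Definition ltrans (K : fieldType) (g : SL2 K) (A : set (SL2 K)) : set (SL2 K) :=
  [set h | exists2 a, A a & val h = val g *m val a].

Definition distG (R : realType) (K : fieldType) (v : K -> int) (q : nat)
    (g h : SL2 K) : R :=
  \big[Num.max/0]_(i < 2) \big[Num.max/0]_(j < 2)
     absv R v q (val g i j - val h i j).

Definition openG (R : realType) (K : fieldType) (v : K -> int) (q : nat) :
    set (set (SL2 K)) :=
  [set U | forall g, U g -> exists2 r : R, 0 < r &
             forall h, distG R v q g h < r -> U h].

Definition compactG (R : realType) (K : fieldType) (v : K -> int) (q : nat)
    (A : set (SL2 K)) : Prop :=
  forall (I : Type) (F : I -> set (SL2 K)),
    (forall i, openG R v q (F i)) -> A `<=` \bigcup_i F i ->
    exists2 J : set I, finite_set J & A `<=` \bigcup_(i in J) F i.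

Definition GBorel (R : realType) (K : fieldType) (v : K -> int) (q : nat) :=
  g_sigma_algebraType (openG R v q).

Definition is_haar_measure (R : realType) (K : fieldType) (v : K -> int)
    (q : nat) (mu : {measure set (GBorel R v q) -> \bar R}) : Prop :=
  [/\ (forall (g : SL2 K) (A : set (GBorel R v q)),
          measurable A -> mu (ltrans g A) = mu A),
      (forall A : set (GBorel R v q), compactG R v q A -> (mu A < +oo)%E) &
      (forall U : set (GBorel R v q), openG R v q U -> U !=set0 ->
          (0 < mu U)%E)].

Definition integralG (K : fieldType) (v : K -> int) (g : SL2 K) : Prop :=
  forall i j, vge v 0 (val g i j).

Definition PTheta (K : fieldType) (v : K -> int) (Theta : set (K * K)) :
    set (SL2 K) :=
  [set g | [/\ integralG v g, val g i0 i1 = 0 & Theta (val g i0 i0, val g i1 i0)]].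

Definition Aset (K : fieldType) (pi : K) (n : nat) : set (SL2 K) :=
  [set g | val g = mx2 (pi ^- n) 0 0 (pi ^+ n)].

Definition Uset (K : fieldType) (D : set K) : set (SL2 K) :=
  [set g | exists2 gamma, D gamma & val g = mx2 1 gamma 0 1].

Definition Neps (R : realType) (q : nat) (eps : R) : int :=
  Num.floor (- (ln eps / ln (q%:R : R))).

Definition Veps (R : realType) (K : fieldType) (v : K -> int) (q : nat)
    (eps : R) : set (SL2 K) :=
  [set g | integralG v g /\
     (eps <= (q%:R : R)^-1 ->
        forall i j, vge v (Neps q eps) (val g i j - (1%:M : 'M[K]_2) i j))].

Definition plus_eps (R : realType) (K : fieldType) (v : K -> int) (q : nat)
    (eps : R) (B : set (SL2 K)) : set (SL2 K) :=
  setmul (setmul (Veps v q eps) B) (Veps v q eps).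

Definition minus_eps (R : realType) (K : fieldType) (v : K -> int) (q : nat)
    (eps : R) (B : set (SL2 K)) : set (SL2 K) :=
  [set x | forall g h, Veps v q eps g -> Veps v q eps h ->
     exists2 b, B b & val x = val g *m val b *m val h].

From HB Require Import structures.
From mathcomp Require Import all_boot all_order all_algebra.
From mathcomp Require Import all_classical all_reals all_analysis.
From mathcomp Require Import ring zify.

(* The sets B_n = P^-_Theta A_n U^+_D' are bi-invariant under one congruence subgroup
   W = ker(SL_2(O) -> SL_2(O / pi^M O)), whatever n. Indeed g lies in B_n iff
   (pi^n g00, pi^n g10) is the first column of an element of P^-_Theta and g01 / g00 lies
   in D', and multiplying g on either side by an element of W moves these three
   quantities by elements of pi^M0 O, where M = M0 + 2k and q^k bounds |g01 / g00| on D'.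
   Closed balls of radius at least q^-M0 are stable under such moves (ultrametric
   inequality). Once eps < q^-M we have 1 in V_eps and V_eps inside W, hence
   V_eps B_n V_eps = B_n = the intersection of the g B_n h over g, h in V_eps. *)

Set Implicit Arguments.
Unset Strict Implicit.
Unset Printing Implicit Defensive.

Import Order.TTheory GRing.Theory Num.Theory.
Local Open Scope classical_set_scope.
Local Open Scope ring_scope.

Section Mx2.
Variable K : fieldType.
Implicit Types (a b c d : K) (M : 'M[K]_2).

Lemma mx2E00 a b c d : mx2 a b c d i0 i0 = a. Proof. by rewrite mxE. Qed.
Lemma mx2E01 a b c d : mx2 a b c d i0 i1 = b. Proof. by rewrite mxE. Qed.
Lemma mx2E10 a b c d : mx2 a b c d i1 i0 = c. Proof. by rewrite mxE. Qed.
Lemma mx2E11 a b c d : mx2 a b c d i1 i1 = d. Proof. by rewrite mxE. Qed.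
Definition mx2E := (mx2E00, mx2E01, mx2E10, mx2E11).

Lemma mx2P M : exists a b c d, M = mx2 a b c d.
Proof.
exists (M i0 i0), (M i0 i1), (M i1 i0), (M i1 i1); apply/matrixP => i j; rewrite mxE.
by case: i => [[|[|i]] Hi] //; case: j => [[|[|j]] Hj] //=; congr (M _ _); apply: val_inj.
Qed.

Lemma mulmx_mx2 a b c d a' b' c' d' :
  mx2 a b c d *m mx2 a' b' c' d' =
  mx2 (a * a' + b * c') (a * b' + b * d') (c * a' + d * c') (c * b' + d * d').
Proof.
apply/matrixP => i j; rewrite !mxE !big_ord_recl big_ord0 !mxE /=.
by case: i => [[|[|i]] Hi] //; case: j => [[|[|j]] Hj] //=; rewrite addr0.
Qed.

Lemma det_mx2 a b c d : \det (mx2 a b c d) = a * d - b * c.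
Proof.
rewrite (expand_det_row _ ord0) !big_ord_recl big_ord0 /cofactor !det_mx11 !mxE /=.
by rewrite addr0 expr0 expr1 mul1r mulN1r mulrN.
Qed.

Lemma mx2_scalar1 : (1%:M : 'M[K]_2) = mx2 1 0 0 1.
Proof.
by apply/matrixP => i j; rewrite !mxE; case: i => [[|[|i]] Hi] //; case: j => [[|[|j]] Hj].
Qed.

Lemma adj_mx2 a b c d : \adj (mx2 a b c d) = mx2 d (- b) (- c) a.
Proof.
apply/matrixP => i j; rewrite !mxE /cofactor det_mx11 !mxE.
by case: i => [[|[|i]] Hi] //; case: j => [[|[|j]] Hj] //=;
  rewrite ?addn0 ?add0n ?addn1 ?expr0 ?expr1 ?mul1r ?mulN1r // sqrrN expr1n mul1r.
Qed.

Lemma det_adj_mx2 M : \det (\adj M) = \det M.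
Proof. by case: (mx2P M) => [a [b [c [d ->]]]]; rewrite adj_mx2 !det_mx2; ring. Qed.

End Mx2.

Lemma det_SL2 (K : fieldType) (g : SL2 K) : \det (val g) = 1.
Proof. exact: eqP (valP g). Qed.

Section BiInvariantSet.
Variables (K : fieldType) (P W : 'M[K]_2 -> Prop) (V : set (SL2 K)).
Hypothesis P_mull : forall G H, \det G = 1 -> P G -> W H -> P (H *m G).
Hypothesis P_mulr : forall G H, \det G = 1 -> P G -> W H -> P (G *m H).
Hypothesis W_adj : forall H, W H -> W (\adj H).
Hypothesis V_W : forall g, V g -> W (val g).
Hypothesis V1 : V (SL2_one K).

Let B := [set g : SL2 K | P (val g)].

Lemma setmul_bi_invariant : setmul (setmul V B) V = B.
Proof.
apply/seteqP; split=> [x [y [h [[g [b [Vg Bb Ey]]] Vh Ex]]]|x Bx].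
  rewrite /B /= Ex Ey; apply: P_mulr (V_W Vh); first by rewrite det_mulmx !det_SL2 mulr1.
  exact: P_mull (det_SL2 b) Bb (V_W Vg).
exists x, (SL2_one K); split=> //=; last by rewrite mulmx1.
by exists (SL2_one K), x; split=> //=; rewrite mul1mx.
Qed.

Lemma bigcap_bi_invariant :
  [set x | forall g h, V g -> V h -> exists2 b, B b & val x = val g *m val b *m val h]
  = B.
Proof.
apply/seteqP; split=> [x /(_ _ _ V1 V1) [b Bb]|x Bx g h Vg Vh].
  by rewrite /= mul1mx mulmx1 => /val_inj ->.
(* The witness is g^-1 x h^-1, the inverse in SL_2 being the adjugate. *)
have dX : \det (\adj (val g) *m val x *m \adj (val h)) == 1.
  by rewrite !det_mulmx !det_adj_mx2 !det_SL2 !mulr1.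
exists (exist (fun M => \det M == 1) _ dX); rewrite /B /=.
  apply: P_mulr (W_adj (V_W Vh)); first by rewrite det_mulmx det_adj_mx2 !det_SL2 mulr1.
  by apply: P_mull (det_SL2 x) Bx (W_adj (V_W Vg)).
by rewrite !mulmxA mul_mx_adj det_SL2 mul1mx -mulmxA mul_adj_mx det_SL2 mulmx1.
Qed.

End BiInvariantSet.

Section Valuation.
Variables (K : fieldType) (v : K -> int).
Hypothesis vM : forall {x y : K}, x != 0 -> y != 0 -> v (x * y) = v x + v y.
Hypothesis vD : forall {x y : K}, x != 0 -> y != 0 -> x + y != 0 ->
  Num.min (v x) (v y) <= v (x + y).

Lemma v1 : v 1 = 0.
Proof.
have := vM (oner_neq0 K) (oner_neq0 K); rewrite mulr1 => /esym/(canRL (addrK _)).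
by rewrite subrr.
Qed.

Lemma vN1 : v (-1) = 0.
Proof.
have N1 : (-1 : K) != 0 by rewrite oppr_eq0 oner_neq0.
have := vM N1 N1; rewrite mulrNN mulr1 v1 => /esym/eqP.
by rewrite -mulr2n mulrn_eq0 => /eqP.
Qed.

Lemma vN x : v (- x) = v x.
Proof.
have [->|x0] := eqVneq x 0; first by rewrite oppr0.
by rewrite -mulN1r vM ?oppr_eq0 ?oner_eq0 // vN1 add0r.
Qed.

Lemma vge0 N : vge v N 0. Proof. by left. Qed.

Lemma vge1 : vge v 0 1. Proof. by right; rewrite v1. Qed.

Lemma vge_neq0 N x : x != 0 -> vge v N x -> N <= v x.
Proof. by move=> x0 [/eqP|//]; rewrite (negbTE x0). Qed.

Lemma vge_le N M x : vge v N x -> M <= N -> vge v M x.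
Proof. by case=> [->|h] MN; [left | right; apply: le_trans h]. Qed.

Lemma vgeM N M x y : vge v N x -> vge v M y -> vge v (N + M) (x * y).
Proof.
have [->|x0] := eqVneq x 0; first by rewrite mul0r; left.
have [->|y0] := eqVneq y 0; first by rewrite mulr0; left.
by move=> /(vge_neq0 x0) hx /(vge_neq0 y0) hy; right; rewrite vM // lerD.
Qed.

Lemma vgeMr N x y : vge v N x -> vge v 0 y -> vge v N (x * y).
Proof. by move=> hx /(vgeM hx); rewrite addr0. Qed.

Lemma vgeMl N x y : vge v 0 x -> vge v N y -> vge v N (x * y).
Proof. by move=> hx /(vgeM hx); rewrite add0r. Qed.

Lemma vgeX n x : vge v 0 x -> vge v 0 (x ^+ n).
Proof.
move=> hx; elim: n => [|n IH]; first by rewrite expr0; apply: vge1.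
by rewrite exprS; apply: vgeMl.
Qed.

Lemma vgeD N x y : vge v N x -> vge v N y -> vge v N (x + y).
Proof.
have [->|x0] := eqVneq x 0; first by rewrite add0r.
have [->|y0] := eqVneq y 0; first by rewrite addr0.
have [->|s0] := eqVneq (x + y) 0; first by left.
move=> /(vge_neq0 x0) hx /(vge_neq0 y0) hy.
by right; apply: le_trans (vD x0 y0 s0); rewrite le_min hx hy.
Qed.

Lemma vgeN N x : vge v N x -> vge v N (- x).
Proof. by case=> [->|h]; [left; rewrite oppr0 | right; rewrite vN]. Qed.

Lemma vgeB N x y : vge v N x -> vge v N y -> vge v N (x - y).
Proof. by move=> hx /vgeN; apply: vgeD. Qed.

Definition vunit (x : K) := x != 0 /\ v x = 0.

Lemma vunit_neq0 x : vunit x -> x != 0. Proof. by case. Qed.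

Lemma vunitMr_neq0 x y : vunit (x * y) -> y != 0.
Proof. by case; rewrite mulf_eq0 negb_or => /andP[]. Qed.

Lemma vunit_vge x : vunit x -> vge v 0 x. Proof. by case=> _ h; right; rewrite h. Qed.

Lemma vunitV x : vunit x -> vunit x^-1.
Proof.
case=> x0 vx; have xV0 : x^-1 != 0 by rewrite invr_eq0.
by split=> //; have := vM x0 xV0; rewrite mulfV // v1 vx add0r => /esym.
Qed.

Lemma vunit_mul1 x y : vge v 0 x -> vge v 0 y -> x * y = 1 -> vunit x.
Proof.
move=> hx hy xy1; have := oner_neq0 K; rewrite -xy1 mulf_eq0 negb_or => /andP[x0 y0].
move: hx hy => /(vge_neq0 x0) hx /(vge_neq0 y0) hy.
by split=> //; have := vM x0 y0; rewrite xy1 v1 => h; lia.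
Qed.

Lemma vunitD a z : vunit a -> vge v 1 z -> vunit (a + z).
Proof.
move=> [a0 va]; have [->|z0] := eqVneq z 0; first by rewrite addr0.
move/(vge_neq0 z0) => vz.
have s0 : a + z != 0.
  apply/eqP => /(canRL (addKr a)); rewrite addr0 => zE.
  by move: vz; rewrite zE vN va.
have nz0 : - z != 0 by rewrite oppr_eq0.
have := vD a0 z0 s0; have := vD s0 nz0; rewrite addrK vN va.
move=> /(_ a0) h1 h2; split=> //; move: h1 h2.
by rewrite !ge_min => /orP[] h1 /orP[] h2; lia.
Qed.

Definition congruent1 (M : int) (H : 'M[K]_2) :=
  [/\ vge v M (H i0 i0 - 1), vge v M (H i0 i1), vge v M (H i1 i0) & vge v M (H i1 i1 - 1)].

Lemma congruent1_adj M H : congruent1 M H -> congruent1 M (\adj H).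
Proof.
case: (mx2P H) => [a [b [c [d ->]]]]; rewrite /congruent1 adj_mx2 !mx2E.
by case=> ha hb hc hd; split=> //; apply: vgeN.
Qed.

Section AbsoluteValue.
Variables (R : realType) (q : nat).
Hypothesis q_gt1 : (1 < q)%N.

Let Q : R := q%:R.
Let Q_gt1 : 1 < Q. Proof. by rewrite /Q ltr1n. Qed.
Let Q_gt0 : 0 < Q. Proof. exact: lt_trans ltr01 Q_gt1. Qed.

Lemma absv_ge0 x : 0 <= absv R v q x.
Proof. by rewrite /absv; case: eqP => // _; rewrite exprz_ge0 // ltW. Qed.

Lemma absv_le_vge M x : vge v M x -> absv R v q x <= Q ^ (- M).
Proof.
rewrite /absv; case: eqP => [_ _|/eqP x0]; first by rewrite exprz_ge0 // ltW.
by move/(vge_neq0 x0); rewrite ler_eXz2l // lerN2.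
Qed.

Lemma absvD_le s M x y : absv R v q x <= s -> vge v M y -> Q ^ (- M) <= s ->
  absv R v q (x + y) <= s.
Proof.
move=> hx hy hM; have [->|y0] := eqVneq y 0; first by rewrite addr0.
have [->|x0] := eqVneq x 0; first by rewrite add0r; apply: le_trans (absv_le_vge hy) hM.
have [s0|s0] := eqVneq (x + y) 0.
  by rewrite s0 /absv eqxx; apply: le_trans (absv_ge0 x) hx.
move/(vge_neq0 y0): hy => hy; have := vD x0 y0 s0; rewrite ge_min => /orP[h|h].
  by apply: le_trans hx; rewrite /absv (negbTE x0) (negbTE s0) ler_eXz2l // lerN2.
by apply: le_trans hM; apply: absv_le_vge; right; apply: le_trans h.
Qed.

Lemma vge0_absv_lt1 x : absv R v q x < 1 -> vge v 0 x.
Proof.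
rewrite /absv; case: eqP => [->|/eqP x0]; first by left.
by rewrite -(expr0z Q) ltr_eXz2l // oppr_lt0 => /ltW; right.
Qed.

Lemma absv_vunit x : vunit x -> absv R v q x = 1.
Proof. by case=> x0 vx; rewrite /absv (negbTE x0) vx oppr0 expr0z. Qed.

Lemma norm2_vunit a c : vunit a -> vge v 0 c -> norm2 R v q (a, c) = 1.
Proof.
move=> ua /absv_le_vge; rewrite oppr0 expr0z /norm2 /= (absv_vunit ua) => c1.
by apply/eqP; rewrite eq_le ge_max lexx c1 le_max lexx.
Qed.

Lemma exists_exprz_le s : 0 < s -> exists M : nat, (0 < M)%N /\ Q ^ (- M%:Z) <= s.
Proof.
move=> s0; have := archi_boundP (ltW (_ : 0 < s^-1)); rewrite invr_gt0 => /(_ s0).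
set B := Num.bound _ => hB; exists B.+1; split => //.
have QB : (B%:R : R) < Q ^+ B.+1.
  by rewrite /Q -natrX ltr_nat (ltn_trans (ltnSn B)) // ltn_expl.
rewrite -exprnN -[s]invrK lef_pV2 ?posrE ?invr_gt0 ?exprn_gt0 //.
exact: ltW (lt_trans hB QB).
Qed.

Lemma le_Neps (M : nat) eps : 0 < eps -> eps <= Q ^ (- M%:Z) -> M%:Z <= Neps q eps.
Proof.
move=> eps0 epsM; have lnQ : 0 < ln Q by apply: ln_gt0.
have : ln eps <= ln (Q ^ (- M%:Z)) by rewrite ler_ln ?posrE ?exprz_gt0.
rewrite -exprnN lnV ?posrE ?exprn_gt0 // lnXn // -mulr_natr => h.
rewrite /Neps floor_ge_int -mulNr ler_pdivlMr // mulrC lerNr.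
exact: h.
Qed.

Lemma Veps1 (eps : R) : Veps v q eps (SL2_one K).
Proof.
split=> [i j|_ i j]; last by rewrite subrr; apply: vge0.
by rewrite /= mxE; case: (i == j); [apply: vge1 | apply: vge0].
Qed.

Lemma Veps_congruent1 (M : nat) eps g : (0 < M)%N -> 0 < eps -> eps <= Q ^ (- M%:Z) ->
  Veps v q eps g -> congruent1 M (val g).
Proof.
move=> M_gt0 eps0 epsM [_ hg].
have eps_le : eps <= Q^-1.
  have -> : Q^-1 = Q ^ (-1) by [].
  by apply: le_trans epsM _; rewrite ler_eXz2l // lerN2 lez_nat.
have {}hg i j : vge v M (val g i j - (1%:M : 'M[K]_2) i j).
  exact: vge_le (hg eps_le i j) (le_Neps eps0 epsM).
rewrite /congruent1; have := hg i0 i0; have := hg i0 i1; have := hg i1 i0; have := hg i1 i1.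
by rewrite mx2_scalar1 !mx2E !subr0.
Qed.

Section PThetaAUInvariance.
Variable pi : K.
Hypothesis pi_neq0 : pi != 0.
Hypothesis pi_vge0 : vge v 0 pi.
Variables (c0 : K * K) (r : R) (d : K) (r' : R) (M0 k : int).
Hypothesis M0_ge1 : 1 <= M0.
Hypothesis k_ge0 : 0 <= k.
Hypothesis M0_r : (q%:R : R) ^ (- M0) <= r.
Hypothesis M0_r' : (q%:R : R) ^ (- M0) <= r'.
Hypothesis r'_lt1 : r' < 1.
Hypothesis d_vge : vge v (- k) d.

Definition PTheta_col (a c : K) :=
  [/\ vunit a, vge v 0 c & ballS1 v q c0 r (a, c)].

(* For g = p a_n u_gamma, p has first column pi^n (g00, g10) and gamma = g01 / g00. *)
Definition in_PThetaAU (n : nat) (G : 'M[K]_2) :=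
  PTheta_col (pi ^+ n * G i0 i0) (pi ^+ n * G i1 i0) /\
  ballK v q d r' (G i0 i1 / G i0 i0).

Lemma PTheta_col_perturb a c a' c' :
  PTheta_col a c -> vge v M0 (a' - a) -> vge v M0 (c' - c) -> PTheta_col a' c'.
Proof.
case=> ua hc [_ hb] ha hc'.
have ua' : vunit a'.
  by rewrite -(subrK a a') addrC; apply: vunitD => //; apply: vge_le ha _.
have hc2 : vge v 0 c'.
  by rewrite -(subrK c c'); apply: vgeD => //; apply: vge_le hc' _; lia.
split=> //; split; first exact: norm2_vunit.
move: hb; rewrite /norm2 /= !ge_max => /andP[b1 b2].
have -> : a' - c0.1 = (a - c0.1) + (a' - a) by ring.
have -> : c' - c0.2 = (c - c0.2) + (c' - c) by ring.
by rewrite (absvD_le b1 ha M0_r) (absvD_le b2 hc' M0_r).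
Qed.

Lemma ballK_perturb x x' : ballK v q d r' x -> vge v M0 (x' - x) -> ballK v q d r' x'.
Proof.
rewrite /ballK /= => hx hx'; have -> : x' - d = (x - d) + (x' - x) by ring.
exact: absvD_le hx hx' M0_r'.
Qed.

Lemma ballK_vge x : ballK v q d r' x -> vge v (- k) x.
Proof.
move=> /le_lt_trans /(_ r'_lt1) /vge0_absv_lt1 hx.
rewrite -(subrK d x); apply: vgeD d_vge; apply: vge_le hx _; lia.
Qed.

Let pin_vge0 n : vge v 0 (pi ^+ n * pi ^+ n).
Proof. exact: vgeMl (vgeX n pi_vge0) (vgeX n pi_vge0). Qed.

Lemma in_PThetaAU_mull n G H :
  \det G = 1 -> in_PThetaAU n G -> congruent1 (M0 + 2 * k) H -> in_PThetaAU n (H *m G).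
Proof.
case: (mx2P G) (mx2P H) => [g00 [g01 [g10 [g11 ->]]]] [h00 [h01 [h10 [h11 ->]]]].
rewrite /in_PThetaAU /congruent1 det_mx2 mulmx_mx2 !mx2E => dG [hT hD] [e00 e01 e10 e11].
have [ua hc _] := hT; have g0 := vunitMr_neq0 ua.
set a := pi ^+ n * g00 in ua hc hT *; set c := pi ^+ n * g10 in hc hT *.
have M0M : M0 <= M0 + 2 * k by lia.
have hT' : PTheta_col (pi ^+ n * (h00 * g00 + h01 * g10)) (pi ^+ n * (h10 * g00 + h11 * g10)).
  apply: PTheta_col_perturb hT _ _.
    have -> : pi ^+ n * (h00 * g00 + h01 * g10) - a = (h00 - 1) * a + h01 * c.
      by rewrite /a /c; ring.
    apply: vgeD; first exact: vgeMr (vge_le e00 M0M) (vunit_vge ua).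
    exact: vgeMr (vge_le e01 M0M) hc.
  have -> : pi ^+ n * (h10 * g00 + h11 * g10) - c = h10 * a + (h11 - 1) * c.
    by rewrite /a /c; ring.
  apply: vgeD; first exact: vgeMr (vge_le e10 M0M) (vunit_vge ua).
  exact: vgeMr (vge_le e11 M0M) hc.
split=> //; apply: ballK_perturb hD _.
have [ua' _ _] := hT'; have s0 := vunitMr_neq0 ua'.
have -> : (h00 * g01 + h01 * g11) / (h00 * g00 + h01 * g10) - g01 / g00 =
    h01 * (g00 * g11 - g01 * g10) * (pi ^+ n * pi ^+ n) * a^-1 *
    (pi ^+ n * (h00 * g00 + h01 * g10))^-1.
  by rewrite /a; field; rewrite s0 g0 expf_neq0.
rewrite dG mulr1; do 2 (apply: vgeMr; last exact/vunit_vge/vunitV).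
exact: vgeMr (vge_le e01 M0M) (pin_vge0 n).
Qed.

(* gamma = g01 / g00 lies in pi^-k O and enters quadratically, whence the level M0 + 2k. *)
Lemma in_PThetaAU_mulr n G H :
  \det G = 1 -> in_PThetaAU n G -> congruent1 (M0 + 2 * k) H -> in_PThetaAU n (G *m H).
Proof.
case: (mx2P G) (mx2P H) => [g00 [g01 [g10 [g11 ->]]]] [h00 [h01 [h10 [h11 ->]]]].
rewrite /in_PThetaAU /congruent1 det_mx2 mulmx_mx2 !mx2E => dG [hT hD] [e00 e01 e10 e11].
have [ua hc _] := hT; have g0 := vunitMr_neq0 ua; have pin0 := expf_neq0 n pi_neq0.
have hg := ballK_vge hD; set gm := g01 / g00 in hD hg.
set a := pi ^+ n * g00 in ua hc hT *; set c := pi ^+ n * g10 in hc hT *.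
have hT' : PTheta_col (pi ^+ n * (g00 * h00 + g01 * h10)) (pi ^+ n * (g10 * h00 + g11 * h10)).
  apply: PTheta_col_perturb hT _ _.
    have -> : pi ^+ n * (g00 * h00 + g01 * h10) - a = a * (h00 - 1) + (a * gm) * h10.
      by rewrite /a /gm; field.
    apply: vgeD; first by apply: vgeMl (vunit_vge ua) (vge_le e00 _); lia.
    by apply: vge_le (vgeM (vgeMl (vunit_vge ua) hg) e10) _; lia.
  have -> : pi ^+ n * (g10 * h00 + g11 * h10) - c =
      c * (h00 - 1) + ((pi ^+ n * pi ^+ n) / a * (g00 * g11 - g01 * g10) + gm * c) * h10.
    by rewrite /a /gm /c; field; rewrite g0 pin0.
  rewrite dG mulr1; apply: vgeD; first by apply: vgeMl hc (vge_le e00 _); lia.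
  have hb : vge v (- k) (pi ^+ n * pi ^+ n / a + gm * c).
    apply: vgeD (vgeMr hg hc); apply: vge_le (_ : vge v 0 _) _; last lia.
    exact: vgeMr (pin_vge0 n) (vunit_vge (vunitV ua)).
  by apply: vge_le (vgeM hb e10) _; lia.
split=> //; apply: ballK_perturb hD _.
have [ua' _ _] := hT'; have s0 := vunitMr_neq0 ua'.
have -> : (g00 * h01 + g01 * h11) / (g00 * h00 + g01 * h10) - gm =
    (h01 + gm * (h11 - 1) - gm * (h00 - 1) - gm * gm * h10) * a *
    (pi ^+ n * (g00 * h00 + g01 * h10))^-1.
  by rewrite /a /gm; field; rewrite s0 g0 pin0.
apply: vgeMr (vunit_vge (vunitV ua')); apply: vgeMr (vunit_vge ua).
apply: vgeB; first apply: vgeB; first apply: vgeD.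
- by apply: vge_le e01 _; lia.
- by apply: vge_le (vgeM hg e11) _; lia.
- by apply: vge_le (vgeM hg e00) _; lia.
- by apply: vge_le (vgeM (vgeM hg hg) e10) _; lia.
Qed.

Definition PThetaAU n :=
  setmul (setmul (PTheta v (ballS1 v q c0 r)) (Aset pi n)) (Uset (ballK v q d r')).

Lemma PThetaAU_sub n : PThetaAU n `<=` [set g | in_PThetaAU n (val g)].
Proof.
move=> g [y [u [[p [t [[Ip p01 Tp] Et Ey]] [gm Dgm Eu] Eg]]]].
have dp := det_SL2 p; have pin0 := expf_neq0 n pi_neq0.
have [p00 [p01' [p10 [p11 Ep]]]] := mx2P (val p).
have Ip00 := Ip i0 i0; have Ip11 := Ip i1 i1; have Ip10 := Ip i1 i0.
rewrite Ep !mx2E in p01 Tp Ip00 Ip11 Ip10; rewrite Ep det_mx2 p01 mul0r subr0 in dp.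
have up := vunit_mul1 Ip00 Ip11 dp; have p0 := vunit_neq0 up.
rewrite /= /in_PThetaAU Eg Eu Ey Et Ep p01 !mulmx_mx2 !mx2E.
rewrite !(mulr0, mul0r, addr0, add0r, mulr1).
have -> : pi ^+ n * (p00 * pi ^- n) = p00 by field.
have -> : pi ^+ n * (p10 * pi ^- n) = p10 by field.
by have -> : p00 * pi ^- n * gm / (p00 * pi ^- n) = gm by field; rewrite p0 pin0.
Qed.

Lemma in_PThetaAU_sub n : [set g | in_PThetaAU n (val g)] `<=` PThetaAU n.
Proof.
move=> g /=; have dg := det_SL2 g; have pin0 := expf_neq0 n pi_neq0.
have [g00 [g01 [g10 [g11 Eg]]]] := mx2P (val g).
rewrite /in_PThetaAU Eg !mx2E; rewrite Eg det_mx2 in dg.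
case=> -[ua hc hT] hD; have g0 := vunitMr_neq0 ua.
set a := pi ^+ n * g00 in ua hc hT; set c := pi ^+ n * g10 in hc hT.
have a0 := vunit_neq0 ua.
pose mkSL2 M (h : \det M == 1) : SL2 K := exist _ M h.
have dp : \det (mx2 a 0 c a^-1) == 1 by rewrite det_mx2 mul0r subr0 mulfV.
have dt : \det (mx2 (pi ^- n) 0 0 (pi ^+ n)) == 1 by rewrite det_mx2 mul0r subr0 mulVf.
have dpt : \det (mx2 a 0 c a^-1 *m mx2 (pi ^- n) 0 0 (pi ^+ n)) == 1.
  by rewrite det_mulmx (eqP dp) (eqP dt) mulr1.
have du : \det (mx2 1 (g01 / g00) 0 1) == 1 by rewrite det_mx2 mulr0 subr0 mulr1.
exists (mkSL2 _ dpt), (mkSL2 _ du); split => /=.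
- exists (mkSL2 _ dp), (mkSL2 _ dt); split => //=; split; rewrite /= ?mx2E //.
  move=> i j; rewrite mxE; do 2 case: ifP => _.
  + exact: vunit_vge ua.
  + exact: vge0.
  + exact: hc.
  + exact/vunit_vge/vunitV.
- by exists (g01 / g00).
- rewrite Eg !mulmx_mx2 /a /c; congr mx2; try by field; rewrite ?g0 ?pin0.
  have -> : g11 = (g00 * g11 - g01 * g10 + g01 * g10) / g00 by field.
  by rewrite dg; field; rewrite g0 pin0.
Qed.

Lemma PThetaAUE n : PThetaAU n = [set g | in_PThetaAU n (val g)].
Proof. by apply/seteqP; split; [apply: PThetaAU_sub | apply: in_PThetaAU_sub]. Qed.

Lemma plus_minus_eps_PThetaAU n (eps : R) :
  (forall g, Veps v q eps g -> congruent1 (M0 + 2 * k) (val g)) ->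
  plus_eps v q eps (PThetaAU n) = minus_eps v q eps (PThetaAU n).
Proof.
move=> V_W; rewrite /plus_eps /minus_eps PThetaAUE.
have mull := @in_PThetaAU_mull n; have mulr := @in_PThetaAU_mulr n.
by rewrite (setmul_bi_invariant mull mulr V_W (Veps1 eps))
  (bigcap_bi_invariant mull mulr (@congruent1_adj _) V_W (Veps1 eps)).
Qed.

End PThetaAUInvariance.
End AbsoluteValue.
End Valuation.

Lemma residue_card_gt1 (K : fieldType) (v : K -> int) (q : nat) (pi : K) :
  is_local_function_field v q pi -> (1 < q)%N.
Proof.
case=> _ [vM vD _ [s [<- _ _ _ repr]] _].
have [a0 a0s h0] := repr 0 (vge0 v 0).
have [a1 a1s h1] := repr 1 (vge1 vM).
have a01 : a0 != a1.
  apply/eqP => a10; have := vgeB vM vD h1 h0; rewrite -a10 sub0r opprK subrK.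
  by move/(vge_neq0 (oner_neq0 K)); rewrite (v1 vM).
have : uniq [:: a0; a1] by rewrite /= inE a01.
by move/uniq_leq_size; apply=> x; rewrite !inE => /orP[] /eqP ->.
Qed.

Theorem proposition4p2 (R : realType) (K : fieldType) (v : K -> int) (q : nat)
    (pi : K) (HK : is_local_function_field v q pi)
    (mu : {measure set (GBorel R v q) -> \bar R})
    (Hmu : is_haar_measure mu)
    (c : K * K) (r : R) (d : K) (r' : R) :
  norm2 R v q c = 1 -> 0 < r < 1 -> 0 < r' < 1 ->
  exists2 eps0 : R, 0 < eps0 &
    exists n0 : nat, forall eps : R, 0 < eps < eps0 ->
      forall n : nat, (n0 <= n)%N ->
      let B := setmul (setmul (PTheta v (ballS1 v q c r)) (Aset pi n))
                      (Uset (ballK v q d r')) in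
      (mu (plus_eps v q eps B) <= mu (minus_eps v q eps B))%E.
Proof.
move=> _ /andP[r_gt0 _] /andP[r'_gt0 r'_lt1].
have q_gt1 := residue_card_gt1 HK; case: HK => _ [vM vD [pi_neq0 vpi] _ _].
have rr'_gt0 : 0 < Num.min r r' by rewrite lt_min r_gt0 r'_gt0.
have [M0 [M0_gt0]] := exists_exprz_le q_gt1 rr'_gt0.
rewrite le_min => /andP[M0_r M0_r'].
pose k := `|v d|%N.
have d_vge : vge v (- k%:Z) d.
  by have [->|d0] := eqVneq d 0; [left | right; rewrite /k abszE; lia].
pose M := (M0 + 2 * k)%N.
exists ((q%:R : R) ^ (- M%:Z)); first by rewrite exprz_gt0 // ltr0n ltnW.
exists 0%N => eps /andP[eps_gt0 eps_lt] n _ /=.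
have pi_vge0 : vge v 0 pi by right; rewrite vpi.
have M0_ge1 : 1 <= M0%:Z by rewrite lez_nat.
have V_W g : Veps v q eps g -> congruent1 v (M0%:Z + 2 * k%:Z) (val g).
  have M_gt0 : (0 < M)%N by rewrite addn_gt0 M0_gt0.
  by move/(Veps_congruent1 q_gt1 M_gt0 eps_gt0 (ltW eps_lt)); rewrite PoszD PoszM.
by rewrite (plus_minus_eps_PThetaAU vM vD q_gt1 pi_neq0 pi_vge0 c M0_ge1 _ M0_r M0_r'
  r'_lt1 d_vge n V_W).
Qed.
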